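(* For every $\sigma\in\mathcal A$, every $\mathbf P_{\!\sigma}=(\mathbf p_{\sigma_d},\dots,\mathbf p_{\sigma_1})\in\mathcal P^\sigma$ and every $1\le n\le d-1$, the quantity $t_\sigma(\mathbf p_{\sigma_d};\dots;\mathbf p_{\sigma_{n+1}};\mathbf p^\ast_{\sigma_n};\dots;\mathbf p^\ast_{\sigma_1})$ equals $$T_n^\sigma+\sum_{k=n+1}^dC_k^{(d),\sigma}(\mathbf P_{\!\sigma})\Big(H(\mathbf p_{\sigma_k})+\int\varphi_k^\sigma\,\mathrm d\mathbf p_{\sigma_k}-\sum_{\ell=1}^n\chi_\ell^\sigma(\mathbf p_{\sigma_k})(T_\ell^\sigma-T_{\ell-1}^\sigma)\Big),$$ and moreover $t_\sigma(\mathbf p^\ast_{\sigma_d};\dots;\mathbf p^\ast_{\sigma_1})=T_d^\sigma$.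
   Context: Setup: $d\ge1$, $\mathcal I=\{1,\dots,N\}$, affine maps with diagonal linear parts $\mathrm{diag}(a_i^{(1)},\dots,a_i^{(d)})$, $\lambda_i^{(n)}=|a_i^{(n)}|\in(0,1)$, no two distinct maps agree on $[0,1]^d$. For a permutation $\sigma$, $\Pi_n^\sigma$ is orthogonal projection onto the span of coordinate axes $\sigma_1,\dots,\sigma_n$; $f_i,f_j$ overlap exactly if $\Pi_n^\sigma f_i=\Pi_n^\sigma f_j$ on $[0,1]^d$; $\mathcal I_n^\sigma$ = smallest elements of the classes of this equivalence relation. $\mathcal A$ = set of permutations $\sigma$ for which some $\mathbf i\in\mathcal I^{\mathbb N}$, $\delta>0$ have $L_\delta(\mathbf i,\sigma_d)\le\dots\le L_\delta(\mathbf i,\sigma_1)$ (ties broken by $\sigma_n>\sigma_{n-1}$), $L_\delta(\mathbf i,n)$ the unique integer with $\prod_{\ell\le L_\delta(\mathbf i,n)}\lambda_{i_\ell}^{(n)}\le\delta<\prod_{\ell\le L_\delta(\mathbf i,n)-1}\lambda_{i_\ell}^{(n)}$. $\mathcal P_n^\sigma$ = probability vectors on $\mathcal I_n^\sigma$; $\mathcal P^\sigma=\mathcal P_d^\sigma\times\dots\times\mathcal P_1^\sigma$. $\chi_n^\sigma(\mathbf p_{\sigma_m})=-\sum_{i\in\mathcal I_m^\sigma}p_{\sigma_m}(i)\log\lambda_i^{(\sigma_n)}$ ($n\le m$); $C_d^{(d),\sigma}=1/\chi_d^\sigma(\mathbf p_{\sigma_d})$, $C_n^{(d),\sigma}=(1-\sum_{m>n}C_m^{(d),\sigma}\chi_n^\sigma(\mathbf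 p_{\sigma_m}))/\chi_n^\sigma(\mathbf p_{\sigma_n})$ (note $C_k^{(d),\sigma}(\mathbf P_{\!\sigma})$ depends only on $\mathbf p_{\sigma_m}$, $m\ge k$). Potentials $\varphi_n^\sigma:\mathcal I_n^\sigma\to\mathbb R$, $\int\varphi_n^\sigma\mathrm d\mathbf p=\sum_ip(i)\varphi_n^\sigma(i)$; $t_\sigma(\mathbf P_{\!\sigma})=\sum_{n=1}^dC_n^{(d),\sigma}(\mathbf P_{\!\sigma})(H(\mathbf p_{\sigma_n})+\int\varphi_n^\sigma\mathrm d\mathbf p_{\sigma_n})$, $H$ Shannon entropy. $T_0^\sigma=0$; $T_n^\sigma$ is the unique solution of $\sum_{i\in\mathcal I_n^\sigma}p^\ast_{\sigma_n}(i)=1$ with $p^\ast_{\sigma_n}(i)=e^{\varphi_n^\sigma(i)}\prod_{\ell=1}^n(\lambda_i^{(\sigma_\ell)})^{T_\ell^\sigma-T_{\ell-1}^\sigma}$, $\mathbf p^\ast_{\sigma_n}=(p^\ast_{\sigma_n}(i))_i$. *)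

From HB Require Import structures.
From mathcomp Require Import all_boot all_order all_algebra all_fingroup.
From mathcomp Require Import all_classical all_reals all_analysis.
Set Implicit Arguments. Unset Strict Implicit. Unset Printing Implicit Defensive.
Import Order.TTheory GRing.Theory Num.Theory.
Local Open Scope ring_scope.

(* Conventions (0-based indexing):
   - the maps are indexed by i : 'I_N, coordinates by c : 'I_d;
     f_i(x)_c = a i c * x c + b i c  (diagonal affine maps);
   - for a permutation s : 'S_d, s k (k : 'I_d) is the paper's sigma_{k+1};
   - a "level" k : 'I_d stands for the paper's level k+1, so P k is
     p_{sigma_{k+1}}, a probability vector on I_{k+1}^sigma, phi k is
     phi_{k+1}^sigma, C P k is C_{k+1}^{(d),sigma}(P), etc.;
   - T : nat -> R with T 0 = T_0^sigma = 0 and T n = T_n^sigma. *)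

Section Defs.
Variables (R : realType) (d N : nat).
Variables (a b : 'I_N -> 'I_d -> R).

Definition affmap (i : 'I_N) (x : 'I_d -> R) : 'I_d -> R :=
  fun c => a i c * x c + b i c.

Definition in_cube (x : 'I_d -> R) : Prop := forall c, 0 <= x c <= 1.

Definition lam (i : 'I_N) (c : 'I_d) : R := `|a i c|.

Variable s : 'S_d.

Definition overlap (n : nat) (i j : 'I_N) : Prop :=
  forall x, in_cube x -> forall l : 'I_d, (l < n)%N -> affmap i x (s l) = affmap j x (s l).

(* I_n^s : smallest elements of the overlap classes *)
Definition inI (n : nat) (i : 'I_N) : bool :=
  `[< forall j, overlap n i j -> (i <= j)%N >].

Definition chi (l m : 'I_d) (q : 'I_N -> R) : R :=
  - \sum_(i < N | inI m.+1 i) q i * ln (lam i (s l)).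

Definition entropy (k : 'I_d) (q : 'I_N -> R) : R :=
  - \sum_(i < N | inI k.+1 i) q i * ln (q i).

Definition intphi (phi : 'I_d -> 'I_N -> R) (k : 'I_d) (q : 'I_N -> R) : R :=
  \sum_(i < N | inI k.+1 i) q i * phi k i.

Definition isProb (k : 'I_d) (q : 'I_N -> R) : Prop :=
  (forall i, inI k.+1 i -> 0 <= q i) /\ \sum_(i < N | inI k.+1 i) q i = 1.

(* C_{k+1} = (1 - sum_{m > k} C_{m+1} chi_{k+1}(P m)) / chi_{k+1}(P k),
   computed by fuel (fuel d is enough); for k = d-1 this is 1/chi_d(P_d). *)
Fixpoint Caux (P : 'I_d -> 'I_N -> R) (fuel : nat) (k : 'I_d) : R :=
  match fuel with
  | 0 => 0
  | f.+1 => (1 - \sum_(m < d | (k < m)%N) Caux P f m * chi k m (P m))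
              / chi k k (P k)
  end.

Definition Ccoef (P : 'I_d -> 'I_N -> R) (k : 'I_d) : R := Caux P d k.

Definition tsig (phi : 'I_d -> 'I_N -> R) (P : 'I_d -> 'I_N -> R) : R :=
  \sum_(k < d) Ccoef P k * (entropy k (P k) + intphi phi k (P k)).

Definition pstar (phi : 'I_d -> 'I_N -> R) (T : nat -> R) (k : 'I_d) (i : 'I_N) : R :=
  expR (phi k i) * \prod_(l < d | (l <= k)%N) (lam i (s l)) `^ (T l.+1 - T l).

Definition isL (w : nat -> 'I_N) (delta : R) (c : 'I_d) (L : nat) : Prop :=
  (0 < L)%N /\ \prod_(l < L) lam (w l) c <= delta
  /\ delta < \prod_(l < L.-1) lam (w l) c.

Definition inA : Prop :=
  exists (w : nat -> 'I_N) (delta : R), 0 < delta /\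
  exists L : 'I_d -> nat, (forall c, isL w delta c (L c)) /\
    forall k k' : 'I_d, k = k'.+1 :> nat ->
      (L (s k) < L (s k'))%N \/ (L (s k) = L (s k') /\ (s k' < s k)%N).

End Defs.

From HB Require Import structures.
From mathcomp Require Import all_boot all_order all_algebra all_fingroup.
From mathcomp Require Import all_classical all_reals all_analysis.
From mathcomp Require Import zify ring.
Import Order.TTheory GRing.Theory Num.Theory.
Local Open Scope ring_scope.

(* The coefficients C_k are defined so that sum_(k >= l) C_k chi_l(p_k) = 1
   for every level l, hence T_n = sum_(l < n) (T_(l+1) - T_l) spreads over the
   levels as sum_k C_k sum_(l < n, l <= k) (T_(l+1) - T_l) chi_l(p_k).  Since
   log p*_k = phi_k + sum_(l <= k) (T_(l+1) - T_l) log lambda^(s_l), the term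
   H(p*_k) + int phi_k dp*_k is exactly the k-th share for k < n, so only the
   levels k >= n remain, and there C_k depends on p_k alone. *)

Section SelfAffineFormalism.
Variables (R : realType) (d N : nat) (a b : 'I_N -> 'I_d -> R) (s : 'S_d).

Local Notation chi := (chi a b s).
Local Notation Ccoef := (Ccoef a b s).

Lemma Caux_fuel (Q : 'I_d -> 'I_N -> R) f f' (k : 'I_d) :
  (d - k <= f)%N -> (d - k <= f')%N -> Caux a b s Q f k = Caux a b s Q f' k.
Proof.
elim: f f' k => [|f IH] [|f'] k hf hf' //=; try by move: (ltn_ord k); lia.
congr ((1 - _) / _); apply: eq_bigr => m km.
by rewrite (IH f') //; move: (ltn_ord m) km hf hf'; lia.
Qed.

Lemma CcoefE (Q : 'I_d -> 'I_N -> R) (k : 'I_d) :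
  Ccoef Q k = (1 - \sum_(m < d | (k < m)%N) Ccoef Q m * chi k m (Q m)) / chi k k (Q k).
Proof.
rewrite /Ccoef (Caux_fuel Q d (d - k.+1).+1 k) ?leq_subr //=; last first.
  by move: (ltn_ord k); lia.
congr ((1 - _) / _); apply: eq_bigr => m km.
by rewrite (Caux_fuel Q _ d m) //; move: (ltn_ord m) km; lia.
Qed.

Lemma eq_Caux (Q Q' : 'I_d -> 'I_N -> R) f (k : 'I_d) :
  (forall m : 'I_d, (k <= m)%N -> Q m = Q' m) -> Caux a b s Q f k = Caux a b s Q' f k.
Proof.
elim: f k => [|f IH] k eqQ //=.
rewrite eqQ //; congr ((1 - _) / _); apply: eq_bigr => m km.
rewrite eqQ ?(ltnW km) // (IH m) // => m' mm'; apply: eqQ; lia.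
Qed.

Lemma sum_Ccoef_chi (Q : 'I_d -> 'I_N -> R) (l : 'I_d) : chi l l (Q l) != 0 ->
  \sum_(m < d | (l <= m)%N) Ccoef Q m * chi l m (Q m) = 1.
Proof.
move=> chi_neq0; rewrite (bigD1 l) //= (CcoefE Q l) mulfVK //.
rewrite (eq_bigl (fun m : 'I_d => (l < m)%N)) ?subrK // => m /=.
by rewrite ltn_neqAle andbC val_eqE eq_sym.
Qed.

Lemma telescope_Ccoef (Q : 'I_d -> 'I_N -> R) (x : nat -> R) (n : nat) :
  (forall l : 'I_d, (l < n)%N -> chi l l (Q l) != 0) ->
  \sum_(l < d | (l < n)%N) x l
  = \sum_(k < d) Ccoef Q k * \sum_(l < d | ((l < n) && (l <= k))%N) x l * chi l k (Q k).
Proof.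
move=> chi_neq0.
under eq_bigr => l ln do rewrite -[x l]mulr1 -(sum_Ccoef_chi _ _ (chi_neq0 l ln)) mulr_sumr.
rewrite (exchange_big_dep xpredT) //=; apply: eq_bigr => k _.
rewrite mulr_sumr; apply: eq_big => [l|l _]; first by rewrite andbC.
by rewrite mulrCA mulrA.
Qed.

Lemma chi_prob_gt0 (l m : 'I_d) (q : 'I_N -> R) :
  (forall i, 0 < lam a i (s l) < 1) -> isProb a b s m q -> 0 < chi l m q.
Proof.
move=> lam01 [q_ge0 q_sum1].
have mlog_gt0 i : 0 < - ln (lam a i (s l)).
  by case/andP: (lam01 i) => ? ?; rewrite oppr_gt0 ln_lt0.
have [i /andP[mi qi_neq0]] : exists i, (inI a b s m.+1 i) && (q i != 0).
  apply/existsP; apply: contraT; rewrite negb_exists => /forallP q0.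
  suff : \sum_(i < N | inI a b s m.+1 i) q i = 0 by rewrite q_sum1 => /eqP; rewrite oner_eq0.
  by apply: big1 => i mi; move: (q0 i); rewrite mi /= negbK => /eqP.
rewrite /chi -sumrN (bigD1 i) //= ltr_pwDl //.
  by rewrite -mulrN mulr_gt0 // lt0r qi_neq0 q_ge0.
by apply: sumr_ge0 => j /andP[mj _]; rewrite -mulrN mulr_ge0 ?q_ge0 ?ltW.
Qed.

Variables (phi : 'I_d -> 'I_N -> R) (T : nat -> R).
Hypothesis lam_gt0 : forall i c, 0 < lam a i c.

Local Notation pstar := (pstar a s phi T).

Lemma pstarE (k : 'I_d) i :
  pstar k i = expR (phi k i + \sum_(l < d | (l <= k)%N) (T l.+1 - T l) * ln (lam a i (s l))).
Proof.
rewrite /pstar expRD (big_morph _ (@expRD R) (@expR0 R)); congr (_ * _).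
by apply: eq_bigr => l _; rewrite /powR gt_eqF.
Qed.

Lemma pstar_gt0 (k : 'I_d) i : 0 < pstar k i.
Proof. by rewrite pstarE expR_gt0. Qed.

Lemma entropy_intphi_pstar (k : 'I_d) :
  entropy a b s k (pstar k) + intphi a b s phi k (pstar k)
  = \sum_(l < d | (l <= k)%N) (T l.+1 - T l) * chi l k (pstar k).
Proof.
rewrite /entropy /intphi /chi -sumrN -big_split /=.
under eq_bigr => i _.
  rewrite [in ln _]pstarE expRK mulrDr addrC opprD addNKr mulr_sumr -sumrN.
over.
rewrite /= exchange_big /=; apply: eq_bigr => l _.
by rewrite -sumrN mulr_sumr; apply: eq_bigr => i _; ring.
Qed.

Hypothesis lam_lt1 : forall i c, lam a i c < 1.

Lemma tsig_pstar_prefix (P : 'I_d -> 'I_N -> R) :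
  (forall k, isProb a b s k (P k)) -> T 0%N = 0 ->
  (forall k : 'I_d, \sum_(i < N | inI a b s k.+1 i) pstar k i = 1) ->
  forall n : nat, (n <= d)%N ->
  tsig a b s phi (fun k => if (k < n)%N then pstar k else P k)
  = T n + \sum_(k < d | (n <= k)%N)
            Ccoef P k * (entropy a b s k (P k) + intphi a b s phi k (P k)
              - \sum_(l < d | (l < n)%N) chi l k (P k) * (T l.+1 - T l)).
Proof.
move=> P_prob T0 pstar_sum1 n nd.
set Q := fun k : 'I_d => if (k < n)%N then pstar k else P k.
have QP (k : 'I_d) : (n <= k)%N -> Q k = P k by rewrite /Q ltnNge => ->.
have CQP (k : 'I_d) : (n <= k)%N -> Ccoef Q k = Ccoef P k.
  by move=> nk; apply: eq_Caux => m km; apply: QP; lia.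
have Tn : T n = \sum_(l < d | (l < n)%N) (T l.+1 - T l).
  rewrite -(big_ord_widen d (fun l => T l.+1 - T l)) //.
  by rewrite -(big_mkord xpredT (fun l => T l.+1 - T l)) telescope_sumr // T0 subr0.
rewrite Tn (telescope_Ccoef Q (fun l => T l.+1 - T l)); last first.
  move=> l ln; apply/lt0r_neq0; rewrite /Q ln.
  apply: chi_prob_gt0 => [i|]; first by rewrite lam_gt0 lam_lt1.
  by split; [move=> i _; exact/ltW/pstar_gt0 | exact: pstar_sum1].
rewrite [X in _ = _ + X](eq_bigl (fun k : 'I_d => ~~ (k < n)%N)); last first.
  by move=> k; rewrite leqNgt.
rewrite [in RHS](bigID (fun k : 'I_d => (k < n)%N)) /= -addrA -big_split /=.
rewrite /tsig (bigID (fun k : 'I_d => (k < n)%N)) /=; congr (_ + _).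
  apply: eq_bigr => k kn; have -> : Q k = pstar k by rewrite /Q kn.
  rewrite entropy_intphi_pstar; congr (_ * _); apply: eq_bigl => l.
  by rewrite andb_idl // => lk; exact: leq_ltn_trans lk kn.
apply: eq_bigr => k; rewrite -leqNgt => nk; rewrite CQP // QP //.
rewrite (eq_bigl (fun l : 'I_d => (l < n)%N)); last first.
  by move=> l; rewrite andb_idr // => ln; exact: ltnW (leq_trans ln nk).
under eq_bigr do rewrite mulrC.
by rewrite mulrBr addrC subrK.
Qed.

End SelfAffineFormalism.

Theorem lemma5p2 (R : realType) (d N : nat) (hd : (1 <= d)%N)
  (a b : 'I_N -> 'I_d -> R)
  (hlam : forall i c, 0 < lam a i c < 1)
  (hdist : forall i j : 'I_N, i <> j ->
     exists x, in_cube x /\ affmap a b i x <> affmap a b j x)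
  (s : 'S_d) (hA : inA a s)
  (phi : 'I_d -> 'I_N -> R)
  (P : 'I_d -> 'I_N -> R) (hP : forall k, isProb a b s k (P k))
  (T : nat -> R) (hT0 : T 0%N = 0)
  (hT : forall k : 'I_d,
     \sum_(i < N | inI a b s k.+1 i) pstar a s phi T k i = 1) :
  (forall n : nat, (1 <= n)%N -> (n <= d.-1)%N ->
     tsig a b s phi (fun k => if (k < n)%N then pstar a s phi T k else P k)
     = T n + \sum_(k < d | (n <= k)%N)
               Ccoef a b s P k * (entropy a b s k (P k) + intphi a b s phi k (P k)
                 - \sum_(l < d | (l < n)%N) chi a b s l k (P k) * (T l.+1 - T l)))
  /\ tsig a b s phi (pstar a s phi T) = T d.
Proof.
have lam_gt0 i c : 0 < lam a i c by case/andP: (hlam i c).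
have lam_lt1 i c : lam a i c < 1 by case/andP: (hlam i c).
have prefix := @tsig_pstar_prefix R d N a b s phi T lam_gt0 lam_lt1 P hP hT0 hT.
split=> [n _ n_lt_d | ]; first by rewrite prefix // (leq_trans n_lt_d (leq_pred d)).
have := prefix d (leqnn d).
rewrite big_pred0 => [|k]; last by rewrite leqNgt ltn_ord.
rewrite addr0 => <-; congr tsig; by apply: funext => k; rewrite ltn_ord.
Qed.
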